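(* Let $A$ be a commutative noetherian ring and $P$ a projective $A$-module. The map $\nu:\widetilde Q(P)\to\mathcal{Q}(P)$, $\nu(f,p,s)=(f,s)$, induces a bijection $\overline{\nu}:\pi_0(\widetilde Q(P))\to\pi_0(\mathcal{Q}(P))$.
   Context: $P^*=\mathrm{Hom}_A(P,A)$ and $P[T]=P\otimes_AA[T]$. Define $\widetilde Q(P)=\{(f,p,s)\in P^*\oplus P\oplus A: f(p)+s(s-1)=0\}$ and $\mathcal{Q}(P)=\{(f,s)\in P^*\oplus A: s(1-s)\in f(P)\}$; define the same sets over $A[T]$ for $P[T]$. For $\mathcal{F}=\widetilde Q$ or $\mathcal{Q}$, $\pi_0(\mathcal{F}(P))$ is the quotient of $\mathcal{F}(P)$ by the equivalence relation generated by $H(0)\sim H(1)$ for $H(T)\in\mathcal{F}(P[T])$, where $H(t)$ is the specialization $T=t$. *)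

From HB Require Import structures.
From mathcomp Require Import all_boot all_order all_algebra.
From Stdlib Require Import Relations ClassicalEpsilon.
Set Implicit Arguments. Unset Strict Implicit. Unset Printing Implicit Defensive.
Import GRing.Theory.
Local Open Scope ring_scope.

Section Defs.
Variable A : comNzRingType.

Definition is_ideal (I : A -> Prop) : Prop :=
  I 0 /\ (forall x y, I x -> I y -> I (x + y)) /\ (forall a x, I x -> I (a * x)).

Definition finitely_generated_ideal (I : A -> Prop) : Prop :=
  exists s : seq A, forall x, I x <->
    exists c : seq A, size c = size s /\ x = \sum_(i < size s) c`_i * s`_i.

Definition noetherian_ring : Prop :=
  forall I : A -> Prop, is_ideal I -> finitely_generated_ideal I.

Definition is_linear (M N : lmodType A) (g : M -> N) : Prop :=
  forall a x y, g (a *: x + y) = a *: g x + g y.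

Definition is_form (P : lmodType A) (f : P -> A) : Prop :=
  forall a x y, f (a *: x + y) = a * f x + f y.

Definition projective (P : lmodType A) : Prop :=
  forall (M N : lmodType A) (g : M -> N) (h : P -> N),
    is_linear g -> (forall y, exists x, g x = y) -> is_linear h ->
    exists k : P -> M, is_linear k /\ forall x, g (k x) = h x.

(* ---------- P[T] = P (x)_A A[T] : finitely supported coefficient sequences ---------- *)
Variable P : lmodType A.

Definition fsupp (c : nat -> P) : Prop := exists n, forall i, (n <= i)%N -> c i = 0.

Record polyM := PolyM { pcoef : nat -> P; pcoefP : fsupp pcoef }.

Lemma fsupp_add (c d : nat -> P) : fsupp c -> fsupp d -> fsupp (fun i => c i + d i).
Proof.
move=> [n Hn] [m Hm]; exists (maxn n m) => i Hi.
rewrite Hn ?Hm ?addr0 //; [exact: leq_trans (leq_maxr n m) Hi|exact: leq_trans (leq_maxl n m) Hi].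
Qed.

Definition scale_coef (q : {poly A}) (c : nat -> P) (i : nat) : P :=
  \sum_(j < i.+1) q`_j *: c (i - j)%N.

Lemma fsupp_scale (q : {poly A}) (c : nat -> P) : fsupp c -> fsupp (scale_coef q c).
Proof.
move=> [n Hn]; exists (size q + n)%N => i Hi.
rewrite /scale_coef big1 // => j _.
have [Hj|Hj] := leqP (size q) j; first by rewrite nth_default // scale0r.
rewrite Hn ?scaler0 //.
have := ltn_ord j; rewrite ltnS => Hji.
rewrite leq_subRL //; apply: leq_trans Hi; rewrite leq_add2r; exact: ltnW.
Qed.

Lemma fsupp_const (x : P) : fsupp (fun i => if i == 0%N then x else 0).
Proof. by exists 1%N => -[|i]. Qed.

Definition padd (p r : polyM) : polyM := PolyM (fsupp_add (pcoefP p) (pcoefP r)).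
Definition pscale (q : {poly A}) (p : polyM) : polyM := PolyM (fsupp_scale q (pcoefP p)).
Definition pconst (x : P) : polyM := PolyM (fsupp_const x).

Definition pbound (p : polyM) : nat := proj1_sig (constructive_indefinite_description _ (pcoefP p)).
Definition peval (t : A) (p : polyM) : P := \sum_(i < pbound p) t ^+ i *: pcoef p i.

Definition is_formT (F : polyM -> {poly A}) : Prop :=
  (forall p r, F (padd p r) = F p + F r) /\ (forall q p, F (pscale q p) = q * F p).

Definition fspec (t : A) (F : polyM -> {poly A}) : P -> A := fun x => (F (pconst x)).[t].

Definition Qtilde (x : (P -> A) * P * A) : Prop :=
  let: (f, p, s) := x in is_form f /\ f p + s * (s - 1) = 0.

Definition Qcal (x : (P -> A) * A) : Prop :=
  let: (f, s) := x in is_form f /\ exists p, f p = s * (1 - s).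

Definition QtildeT (H : (polyM -> {poly A}) * polyM * {poly A}) : Prop :=
  let: (F, p, s) := H in is_formT F /\ F p + s * (s - 1) = 0.

Definition QcalT (H : (polyM -> {poly A}) * {poly A}) : Prop :=
  let: (F, s) := H in is_formT F /\ exists p, F p = s * (1 - s).

Definition specT (t : A) (H : (polyM -> {poly A}) * polyM * {poly A}) : (P -> A) * P * A :=
  let: (F, p, s) := H in (fspec t F, peval t p, s.[t]).

Definition specC (t : A) (H : (polyM -> {poly A}) * {poly A}) : (P -> A) * A :=
  let: (F, s) := H in (fspec t F, s.[t]).

(* elementary homotopies and the generated equivalence relations defining pi_0 *)
Definition homot_tilde (x y : (P -> A) * P * A) : Prop :=
  exists H, QtildeT H /\ specT 0 H = x /\ specT 1 H = y.
Definition homot_cal (x y : (P -> A) * A) : Prop :=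
  exists H, QcalT H /\ specC 0 H = x /\ specC 1 H = y.

Definition pi0_tilde_rel := clos_refl_sym_trans _ homot_tilde.
Definition pi0_cal_rel := clos_refl_sym_trans _ homot_cal.

Definition nu (x : (P -> A) * P * A) : (P -> A) * A := let: (f, p, s) := x in (f, s).

End Defs.

(* The map nu is onto Q(P): a witness p with f(p) = s(1 - s) gives (f, p, s).
   Its fibres are connected: if f(p) = f(p'), the constant form f extended to
   P[T], the segment p + T(p' - p) and the constant s form an element of
   Qtilde(P[T]) joining (f, p, s) to (f, p', s).  A homotopy (F, s) in
   Q(P[T]) comes with a witness p(T), so it lifts to the homotopy (F, p, s) in
   Qtilde(P[T]).  Hence nu is compatible with the two equivalence relations
   and injective on classes. *)

From mathcomp Require Import all_boot all_order all_algebra.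
From Stdlib Require Import Relations FunctionalExtensionality ProofIrrelevance ClassicalEpsilon.
Set Implicit Arguments. Unset Strict Implicit. Unset Printing Implicit Defensive.
Import GRing.Theory.
Local Open Scope ring_scope.

Lemma addr_mulsubr1_eq0 (R : pzRingType) (a s : R) :
  a + s * (s - 1) = 0 <-> a = s * (1 - s).
Proof.
have -> : s * (1 - s) = - (s * (s - 1)) by rewrite -mulrN opprB.
by split=> [/eqP | ->]; [rewrite addr_eq0 => /eqP | rewrite addNr].
Qed.

Section Forms.
Variables (A : comNzRingType) (P : lmodType A) (f : P -> A).
Hypothesis f_form : is_form f.

Lemma form0 : f 0 = 0.
Proof. by have /eqP := f_form 1 0 0; rewrite scale1r addr0 mul1r -subr_eq subrr eq_sym => /eqP. Qed.

Lemma formD x y : f (x + y) = f x + f y.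
Proof. by have := f_form 1 x y; rewrite scale1r mul1r. Qed.

Lemma formZ a x : f (a *: x) = a * f x.
Proof. by have := f_form a x 0; rewrite addr0 form0 addr0. Qed.

Lemma formB x y : f (x - y) = f x - f y.
Proof. by rewrite -scaleN1r formD formZ mulN1r. Qed.

Lemma form_sum n (g : 'I_n -> P) : f (\sum_(i < n) g i) = \sum_(i < n) f (g i).
Proof.
elim: n g => [|n IHn] g; first by rewrite !big_ord0 form0.
by rewrite !big_ord_recr /= formD IHn.
Qed.

End Forms.

Section PolyModule.
Variables (A : comNzRingType) (P : lmodType A).

Lemma polyM_ext (a b : polyM P) : pcoef a =1 pcoef b -> a = b.
Proof.
case: a b => ca ha [cb hb] /= /functional_extensionality eq_c.
by subst cb; congr PolyM; apply: proof_irrelevance.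
Qed.

Lemma pcoef_pbound (c : polyM P) i : (pbound c <= i)%N -> pcoef c i = 0.
Proof. by rewrite /pbound; case: constructive_indefinite_description => n /= /[apply]. Qed.

Lemma peval_bound t (c : polyM P) n : (forall i, (n <= i)%N -> pcoef c i = 0) ->
  peval t c = \sum_(i < n) t ^+ i *: pcoef c i.
Proof.
have big_trunc m k (g : nat -> P) : (k <= m)%N -> (forall i, (k <= i)%N -> g i = 0) ->
    \sum_(i < m) g i = \sum_(i < k) g i.
  move=> le_km g0; rewrite (big_ord_widen _ _ le_km) [RHS]big_mkcond.
  by apply: eq_bigr => i _; case: ltnP => // /g0.
move=> c0; rewrite /peval; set g := fun i => t ^+ i *: pcoef c i.
case: (leqP n (pbound c)) => [le_n | /ltnW le_b].
  by apply: (big_trunc _ _ g) => // i /c0; rewrite /g => ->; rewrite scaler0.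
by symmetry; apply: (big_trunc _ _ g) => // i /pcoef_pbound; rewrite /g => ->; rewrite scaler0.
Qed.

Lemma scale_coefC a (c : nat -> P) i : scale_coef a%:P c i = a *: c i.
Proof.
rewrite /scale_coef big_ord_recl /= coefC eqxx subn0 big1 ?addr0 // => j _.
by rewrite coefC scale0r.
Qed.

Lemma scale_coefXn_pconst n (x : P) i :
  scale_coef 'X^n (pcoef (pconst x)) i = if i == n then x else 0.
Proof.
rewrite /scale_coef.
transitivity (\sum_(j < i.+1 | j == n :> nat) (if (i - j == 0)%N then x else 0)).
  rewrite [RHS]big_mkcond; apply: eq_bigr => j _; rewrite coefXn.
  by case: eqP; rewrite ?scale1r ?scale0r.
rewrite (big_ord1_eq _ (fun j : nat => if (i - j == 0)%N then x else 0)).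
case: (ltngtP i n) => [lt_in | lt_ni | ->].
- by rewrite ltnNge lt_in.
- by rewrite ltnW // subn_eq0 leqNgt lt_ni.
- by rewrite ltnSn subnn.
Qed.

Lemma pconst_linear a (x y : P) :
  pconst (a *: x + y) = padd (pscale a%:P (pconst x)) (pconst y).
Proof.
apply: polyM_ext => i; rewrite /= scale_coefC.
by case: eqP; rewrite ?scaler0 ?addr0.
Qed.

Section FormT.
Variable F : polyM P -> {poly A}.
Hypothesis F_formT : is_formT F.

Lemma formT_pconst0 : F (pconst 0) = 0.
Proof.
have /(congr1 F) : pconst (0 : P) = padd (pconst 0) (pconst 0).
  by apply: polyM_ext => i /=; case: eqP; rewrite addr0.
by rewrite F_formT.1 => /eqP; rewrite -subr_eq subrr eq_sym => /eqP.
Qed.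

Lemma fspec_form t : is_form (fspec t F).
Proof. by move=> a x y; rewrite /fspec pconst_linear F_formT.1 F_formT.2 hornerD hornerCM. Qed.

(* Induction on a support bound n, splitting off the top coefficient as T^n (x) c_n. *)
Lemma horner_formT_sum t n (c : polyM P) : (forall i, (n <= i)%N -> pcoef c i = 0) ->
  (F c).[t] = fspec t F (\sum_(i < n) t ^+ i *: pcoef c i).
Proof.
elim: n c => [|n IHn] c c0.
  have -> : c = pconst 0 by apply: polyM_ext => i /=; rewrite c0 //; case: eqP.
  by rewrite formT_pconst0 big_ord0 horner0 (form0 (fspec_form t)).
pose d i := if i == n then 0 else pcoef c i.
have d_fsupp : fsupp d by exists n.+1 => i le_ni; rewrite /d c0 //; case: eqP.
have split_c : c = padd (PolyM d_fsupp) (pscale 'X^n (pconst (pcoef c n))).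
  apply: polyM_ext => i; rewrite /= scale_coefXn_pconst /d.
  by case: eqP => [->|_]; rewrite ?add0r ?addr0.
rewrite {1}split_c F_formT.1 F_formT.2 hornerD hornerM hornerXn IHn; last first.
  by move=> i le_ni; rewrite /= /d; case: eqP => // /eqP ne_in; rewrite c0 // ltn_neqAle eq_sym ne_in.
rewrite big_ord_recr /= addrC (fspec_form t (t ^+ n)) addrC /=; congr (_ + _).
by congr (fspec t F _); apply: eq_bigr => i _; rewrite /d ltn_eqF.
Qed.

Lemma horner_formT t (c : polyM P) : (F c).[t] = fspec t F (peval t c).
Proof. exact/horner_formT_sum/pcoef_pbound. Qed.

End FormT.

Definition extT (f : P -> A) (c : polyM P) : {poly A} := \poly_(i < pbound c) f (pcoef c i).

Section ExtT.
Variable f : P -> A.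
Hypothesis f_form : is_form f.

Lemma coef_extT c i : (extT f c)`_i = f (pcoef c i).
Proof. by rewrite coef_poly; case: ltnP => // /pcoef_pbound ->; rewrite (form0 f_form). Qed.

Lemma extT_formT : is_formT (extT f).
Proof.
split=> [c d | q c]; apply/polyP => i.
  by rewrite coefD !coef_extT /= (formD f_form).
rewrite coefM coef_extT /= /scale_coef (form_sum f_form).
by apply: eq_bigr => j _; rewrite (formZ f_form) coef_extT.
Qed.

Lemma fspec_extT t : fspec t (extT f) = f.
Proof.
apply: functional_extensionality => x; rewrite /fspec.
have -> : extT f (pconst x) = (f x)%:P.
  by apply/polyP => i; rewrite coef_extT coefC /=; case: eqP; rewrite ?(form0 f_form).
by rewrite hornerC.
Qed.

End ExtT.

Lemma segment_fsupp (p q : P) :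
  fsupp (fun i => if i == 0%N then p else if i == 1%N then q - p else 0).
Proof. by exists 2%N => -[|[|i]]. Qed.

Definition segment (p q : P) : polyM P := PolyM (segment_fsupp p q).

Lemma peval_segment t (p q : P) : peval t (segment p q) = p + t *: (q - p).
Proof.
rewrite (@peval_bound _ _ 2%N); last by case=> [|[|i]].
by rewrite !big_ord_recr big_ord0 /= add0r scale1r.
Qed.

Lemma extT_segment (f : P -> A) (p q : P) : is_form f -> f p = f q ->
  extT f (segment p q) = (f p)%:P.
Proof.
move=> f_form fpq; apply/polyP => i; rewrite coef_extT // coefC /=.
by case: i => [|[|i]] //=; rewrite ?(formB f_form) ?fpq ?subrr ?(form0 f_form).
Qed.

Lemma Qtilde_Qcal (x : (P -> A) * P * A) : Qtilde x -> Qcal (nu x).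
Proof. by case: x => [[f p] s] [f_form /addr_mulsubr1_eq0 fp]; split; last exists p. Qed.

Lemma Qcal_lift (z : (P -> A) * A) : Qcal z -> exists x, Qtilde x /\ nu x = z.
Proof. by case: z => f s [f_form [p /addr_mulsubr1_eq0 fp]]; exists (f, p, s). Qed.

Lemma specT_Qtilde t (H : (polyM P -> {poly A}) * polyM P * {poly A}) :
  QtildeT H -> Qtilde (specT t H).
Proof.
case: H => [[F p] s] [F_formT /(congr1 (horner^~ t))].
by rewrite /= -horner_formT // !hornerE; split; first exact: fspec_form.
Qed.

Lemma homot_tilde_nu (x y : (P -> A) * P * A) :
  homot_tilde x y -> homot_cal (nu x) (nu y).
Proof.
case=> -[[F p] s] [[F_formT /addr_mulsubr1_eq0 Fp] [<- <-]].
by exists (F, s); split=> //; split; last exists p.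
Qed.

Lemma homot_cal_lift (z w : (P -> A) * A) : homot_cal z w ->
  exists x y, [/\ Qtilde x, Qtilde y, nu x = z, nu y = w & homot_tilde x y].
Proof.
case=> -[F s] [[F_formT [p /addr_mulsubr1_eq0 Fp]] [<- <-]].
have QtildeT_Fps : QtildeT (F, p, s) by [].
exists (specT 0 (F, p, s)), (specT 1 (F, p, s)).
split=> //; try exact: (specT_Qtilde _ QtildeT_Fps).
by exists (F, p, s).
Qed.

Lemma nu_fibre_homot (x y : (P -> A) * P * A) :
  Qtilde x -> Qtilde y -> nu x = nu y -> homot_tilde x y.
Proof.
case: x y => [[f p] s] [[g q] r] [f_form fp] [_ fq] [eq_fg eq_sr]; subst g r.
have fpq : f p = f q by apply: (addIr (s * (s - 1))); rewrite fp fq.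
exists (extT f, segment p q, s%:P); split.
  split; first exact: extT_formT.
  by rewrite extT_segment // -polyC1 -polyCB -polyCM -polyCD fp.
by rewrite /= !fspec_extT // !peval_segment !hornerC scale0r scale1r addr0 addrC subrK.
Qed.

Lemma pi0_tilde_nu (x y : (P -> A) * P * A) :
  pi0_tilde_rel x y -> pi0_cal_rel (nu x) (nu y).
Proof.
elim=> {x y} [x y xy | x | x y _ | x y z _ IHxy _ IHyz].
- exact/rst_step/homot_tilde_nu.
- exact: rst_refl.
- exact: rst_sym.
- exact: rst_trans IHyz.
Qed.

Lemma pi0_cal_lift (z w : (P -> A) * A) : pi0_cal_rel z w ->
  forall x y, Qtilde x -> Qtilde y -> nu x = z -> nu y = w -> pi0_tilde_rel x y.
Proof.
move=> /(@clos_rst_rst1n _ _ _ _).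
elim=> {z w} [z | z u w zu _ IHuw] x y Qx Qy nu_x nu_y.
  by apply/rst_step/nu_fibre_homot; rewrite ?nu_x ?nu_y.
have [x' [u' [Qx' Qu' nu_x' nu_u' x'u']]] :
    exists x' u', [/\ Qtilde x', Qtilde u', nu x' = z, nu u' = u & pi0_tilde_rel x' u'].
  case: zu => [/homot_cal_lift [x' [u' [? ? ? ? ?]]] | /homot_cal_lift [u' [x' [? ? ? ? ?]]]].
  - by exists x', u'; split=> //; apply: rst_step.
  - by exists x', u'; split=> //; apply/rst_sym/rst_step.
apply: rst_trans (IHuw u' y Qu' Qy nu_u' nu_y).
by apply: rst_trans x'u'; apply/rst_step/nu_fibre_homot; rewrite ?nu_x ?nu_x'.
Qed.

End PolyModule.

Theorem theorem2p7 (A : comNzRingType) (P : lmodType A) :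
  noetherian_ring A -> projective P ->
  (forall x : (P -> A) * P * A, Qtilde x -> Qcal (nu x)) /\
  (forall x y : (P -> A) * P * A, Qtilde x -> Qtilde y -> pi0_tilde_rel x y -> pi0_cal_rel (nu x) (nu y)) /\
  (forall z : (P -> A) * A, Qcal z -> exists x, Qtilde x /\ pi0_cal_rel z (nu x)) /\
  (forall x y : (P -> A) * P * A, Qtilde x -> Qtilde y -> pi0_cal_rel (nu x) (nu y) -> pi0_tilde_rel x y).
Proof.
move=> _ _; split; first exact: Qtilde_Qcal.
split; first by move=> x y _ _; exact: pi0_tilde_nu.
split; first by move=> z /Qcal_lift [x [Qx <-]]; exists x; split=> //; apply: rst_refl.
by move=> x y Qx Qy /pi0_cal_lift; apply.
Qed.
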